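(* Let $((F,\boxplus,\boxdot),(F,\cdot))$ be a left near-vector space (the vector set and the scalar group having the same underlying set $F$) such that $F\boxdot 1=\{\alpha\boxdot1:\alpha\in F\}=F$. Then for every $\gamma\in F\setminus\{0\}$, $\gamma$ lies in the quasi-kernel, the operation $\boxplus_\gamma:=+_\gamma$ on $F$ is well-defined, $(F,\boxplus_\gamma,\cdot)$ is a left near-field, and $((F,\boxplus,\boxdot),(F,\cdot))$ is isomorphic as a near-vector space to the canonical near-vector space $((F,\boxplus_\gamma,\cdot),(F,\cdot))$.
   Context: A scalar group is a tuple $(F,\cdot,1,0,-1)$ where $(F,\cdot,1)$ is a monoid, $0\ne1$, $0\alpha=\alpha0=0$, $\{1,-1\}$ is exactly the solution set of $x^2=1$, and $(F\setminus\{0\},\cdot)$ is a group. A left near-field $(F,+,\cdot)$ is a set with a group operation $+$ (identity $0$), an associative multiplication such that $(F\setminus\{0\},\cdot)$ is a group and $0\cdot\alpha=0$, and the left distributive law $\gamma(\alpha+\beta)=\gamma\alpha+\gamma\beta$. A (left) near-vector space is a pair $((V,\boxplus,\boxdot),(F,\cdot))$ where $(F,\cdot)$ is a scalar group, $(V,\boxplus)$ an abelian group, and $\boxdot:F\times V\to V$ satisfies $1\boxdot v=v$, $\alpha\boxdot(\beta\boxdot v)=(\alpha\beta)\boxdot v$, $\alpha\boxdot(v\boxplus w)=\alpha\boxdot v\boxplus\alpha\boxdot w$, $(-1)\boxdot v=\boxminus v$, $0\boxdot v=0$, freeness ($\alpha\boxdot v=\beta\boxdot v$ implies $v=0$ or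 $\alpha=\beta$), and the quasi-kernel $Q(V)=\{v\in V:\forall\alpha,\beta\in F\ \exists\gamma\in F,\ \alpha\boxdot v\boxplus\beta\boxdot v=\gamma\boxdot v\}$ generates $(V,\boxplus)$. For $u\in Q(V)\setminus\{0\}$, $\alpha+_u\beta$ denotes the unique $\gamma\in F$ with $\alpha\boxdot u\boxplus\beta\boxdot u=\gamma\boxdot u$. An isomorphism $(\Psi,\varphi)$ from $((V_1,\boxplus_1,\boxdot_1),(F_1,\cdot_1))$ to $((V_2,\boxplus_2,\boxdot_2),(F_2,\cdot_2))$ consists of an additive bijection $\Psi:V_1\to V_2$ and a group isomorphism $\varphi:(F_1\setminus\{0\},\cdot_1)\to(F_2\setminus\{0\},\cdot_2)$ with $\Psi(\alpha\boxdot_1u)=\varphi(\alpha)\boxdot_2\Psi(u)$ for all $u\in V_1$, $\alpha\in F_1\setminus\{0\}$. The canonical near-vector space of a left near-field $(F,+,\cdot)$ is $((F,+,\cdot),(F,\cdot))$, the action being the multiplication. *)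

Definition is_scalar_group (F : Type) (mul : F -> F -> F) (one zero m1 : F)
  : Prop :=
  (forall a b c, mul a (mul b c) = mul (mul a b) c) /\
  (forall a, mul one a = a /\ mul a one = a) /\
  zero <> one /\
  (forall a, mul zero a = zero /\ mul a zero = zero) /\
  (forall x, mul x x = one <-> (x = one \/ x = m1)) /\
  (forall a b, a <> zero -> b <> zero -> mul a b <> zero) /\
  (forall a, a <> zero ->
     exists b, b <> zero /\ mul a b = one /\ mul b a = one).

Definition is_abelian_group (V : Type) (add : V -> V -> V) (vz : V)
  (vopp : V -> V) : Prop :=
  (forall u v w, add u (add v w) = add (add u v) w) /\
  (forall u v, add u v = add v u) /\
  (forall u, add vz u = u) /\
  (forall u, add (vopp u) u = vz).

Definition in_quasi_kernel (V F : Type) (add : V -> V -> V)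
  (act : F -> V -> V) (v : V) : Prop :=
  forall a b : F, exists c : F, add (act a v) (act b v) = act c v.

Definition is_near_vector_space (V F : Type)
  (add : V -> V -> V) (vz : V) (vopp : V -> V) (act : F -> V -> V)
  (mul : F -> F -> F) (one zero m1 : F) : Prop :=
  is_scalar_group F mul one zero m1 /\
  is_abelian_group V add vz vopp /\
  (forall v, act one v = v) /\
  (forall a b v, act a (act b v) = act (mul a b) v) /\
  (forall a v w, act a (add v w) = add (act a v) (act a w)) /\
  (forall v, act m1 v = vopp v) /\
  (forall v, act zero v = vz) /\
  (forall a b v, act a v = act b v -> v = vz \/ a = b) /\
  (* the quasi-kernel generates (V, add): every subgroup containing Q(V)
     is all of V *)
  (forall S : V -> Prop,
     S vz -> (forall u w, S u -> S w -> S (add u w)) ->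
     (forall u, S u -> S (vopp u)) ->
     (forall q, in_quasi_kernel V F add act q -> S q) ->
     forall v, S v).

Definition is_left_near_field (F : Type) (plus mul : F -> F -> F) (zero : F)
  : Prop :=
  (forall a b c, plus a (plus b c) = plus (plus a b) c) /\
  (forall a, plus zero a = a /\ plus a zero = a) /\
  (forall a, exists b, plus a b = zero /\ plus b a = zero) /\
  (forall a b c, mul a (mul b c) = mul (mul a b) c) /\
  (forall a b, a <> zero -> b <> zero -> mul a b <> zero) /\
  (exists e, e <> zero /\
     forall a, a <> zero ->
       mul e a = a /\ mul a e = a /\
       exists b, b <> zero /\ mul a b = e /\ mul b a = e) /\
  (forall a, mul zero a = zero) /\
  (forall c a b, mul c (plus a b) = plus (mul c a) (mul c b)).

(* Isomorphism (Psi, phi) of near-vector spaces.  [phi] is only meaningful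
   on F1 \ {0}; it is required to be a group isomorphism
   (F1 \ {0}, mul1) -> (F2 \ {0}, mul2). *)
Definition is_nvs_isomorphism (V1 F1 V2 F2 : Type)
  (add1 : V1 -> V1 -> V1) (act1 : F1 -> V1 -> V1)
  (mul1 : F1 -> F1 -> F1) (zero1 : F1)
  (add2 : V2 -> V2 -> V2) (act2 : F2 -> V2 -> V2)
  (mul2 : F2 -> F2 -> F2) (zero2 : F2)
  (Psi : V1 -> V2) (phi : F1 -> F2) : Prop :=
  (forall u v, Psi (add1 u v) = add2 (Psi u) (Psi v)) /\
  (forall u v, Psi u = Psi v -> u = v) /\
  (forall w, exists u, Psi u = w) /\
  (forall a, a <> zero1 -> phi a <> zero2) /\
  (forall a b, a <> zero1 -> b <> zero1 -> phi (mul1 a b) = mul2 (phi a) (phi b)) /\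
  (forall a b, a <> zero1 -> b <> zero1 -> phi a = phi b -> a = b) /\
  (forall c, c <> zero2 -> exists a, a <> zero1 /\ phi a = c) /\
  (forall u a, a <> zero1 -> Psi (act1 a u) = act2 (phi a) (Psi u)).

(* If the orbit of a nonzero vector gamma is the whole of V, the orbit map
   a |-> a ⊡ gamma is a bijection F -> V which is equivariant for the left
   multiplication of F on itself.  Pulling the addition of V back along it
   gives +_gamma: the abelian group axioms of V become those of (F, +_gamma),
   and distributivity of the action becomes left distributivity of the
   multiplication.  The inverse of the orbit map is then the isomorphism onto
   the canonical near-vector space.  When V = F and F ⊡ 1 = F, every nonzero
   gamma = alpha ⊡ 1 has full orbit, since 1 = alpha^-1 ⊡ gamma. *)

From Stdlib Require Import Classical ClassicalEpsilon.

Section ScalarGroup.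

Local Set Implicit Arguments.

Variables (F : Type) (mul : F -> F -> F) (one zero m1 : F).
Hypothesis sg : is_scalar_group F mul one zero m1.

Lemma mulA a b c : mul a (mul b c) = mul (mul a b) c.
Proof. apply sg. Qed.

Lemma mul1l a : mul one a = a.
Proof. apply sg. Qed.

Lemma mul1r a : mul a one = a.
Proof. apply sg. Qed.

Lemma mul0l a : mul zero a = zero.
Proof. apply sg. Qed.

Lemma mul0r a : mul a zero = zero.
Proof. apply sg. Qed.

Lemma zero_neq_one : zero <> one.
Proof. apply sg. Qed.

Lemma mul_neq0 a b : a <> zero -> b <> zero -> mul a b <> zero.
Proof. apply sg. Qed.

Lemma mul_inverse a :
  a <> zero -> exists b, b <> zero /\ mul a b = one /\ mul b a = one.
Proof. apply sg. Qed.

Lemma mulIf v a b : v <> zero -> mul a v = mul b v -> a = b.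
Proof.
  intros Hv E.
  destruct (mul_inverse Hv) as [w [_ [Hvw _]]].
  rewrite <- (mul1r a), <- (mul1r b), <- Hvw, !mulA, E.
  reflexivity.
Qed.

Section AdditiveStructure.

Variables (plus : F -> F -> F) (opp : F -> F).
Hypothesis ag : is_abelian_group F plus zero opp.
Hypothesis mul_plusr :
  forall c a b, mul c (plus a b) = plus (mul c a) (mul c b).

Lemma add0l a : plus zero a = a.
Proof. apply ag. Qed.

Lemma add0r a : plus a zero = a.
Proof. destruct ag as (_ & addC & _). rewrite addC. apply add0l. Qed.

Lemma left_near_field_of_scalar_group : is_left_near_field F plus mul zero.
Proof.
  destruct ag as (addA & addC & _ & addNr).
  repeat split; auto using add0l, add0r, mulA, mul_neq0, mul0l.
  - intro a. exists (opp a). rewrite addC. auto.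
  - exists one. split; [intro E; apply zero_neq_one; symmetry; exact E |].
    intros a Ha. split; [apply mul1l |]. split; [apply mul1r |].
    destruct (mul_inverse Ha) as [b Hb]. exists b. exact Hb.
Qed.

End AdditiveStructure.

Section Canonical.

Variable plus : F -> F -> F.
Hypothesis ag : is_abelian_group F plus zero (mul m1).
Hypothesis mul_plusr :
  forall c a b, mul c (plus a b) = plus (mul c a) (mul c b).

(* For v <> 0 the coefficient is (a v + b v) v^-1. *)
Lemma in_quasi_kernel_canonical v : in_quasi_kernel F F plus mul v.
Proof.
  intros a b.
  destruct (classic (v = zero)) as [-> | Hv].
  - exists zero. rewrite !mul0r. apply (add0l ag).
  - destruct (mul_inverse Hv) as [w [_ [_ Hwv]]].
    exists (mul (plus (mul a v) (mul b v)) w).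
    rewrite <- mulA, Hwv, mul1r. reflexivity.
Qed.

Lemma canonical_near_vector_space :
  is_near_vector_space F F plus zero (mul m1) mul mul one zero m1.
Proof.
  split; [exact sg |]. split; [exact ag |].
  repeat split; auto using mul1l, mulA, mul0l.
  - intros a b v E. destruct (classic (v = zero)) as [Hv | Hv]; [left | right].
    + exact Hv.
    + exact (mulIf Hv E).
  - intros S _ _ _ HQ v. apply HQ, in_quasi_kernel_canonical.
Qed.

End Canonical.

End ScalarGroup.

Section NearVectorSpace.

Local Set Implicit Arguments.

Variables (V F : Type) (add : V -> V -> V) (vz : V) (vopp : V -> V)
  (act : F -> V -> V) (mul : F -> F -> F) (one zero m1 : F).
Hypothesis nvs : is_near_vector_space V F add vz vopp act mul one zero m1.

Lemma nvs_scalar_group : is_scalar_group F mul one zero m1.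
Proof. exact (proj1 nvs). Qed.

Lemma nvs_abelian_group : is_abelian_group V add vz vopp.
Proof. exact (proj1 (proj2 nvs)). Qed.

Lemma actA a b v : act a (act b v) = act (mul a b) v.
Proof. destruct nvs as (_ & _ & _ & H & _). apply H. Qed.

Lemma act_addr a v w : act a (add v w) = add (act a v) (act a w).
Proof. destruct nvs as (_ & _ & _ & _ & H & _). apply H. Qed.

Lemma actN1 v : act m1 v = vopp v.
Proof. destruct nvs as (_ & _ & _ & _ & _ & H & _). apply H. Qed.

Lemma act0 v : act zero v = vz.
Proof. destruct nvs as (_ & _ & _ & _ & _ & _ & H & _). apply H. Qed.

Lemma act_free a b v : act a v = act b v -> v = vz \/ a = b.
Proof. destruct nvs as (_ & _ & _ & _ & _ & _ & _ & H & _). apply H. Qed.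

Definition full_orbit (u : V) : Prop := forall w, exists a, act a u = w.

Lemma full_orbit_trans u v : v <> vz -> full_orbit u -> full_orbit v.
Proof.
  intros Hv Hu w.
  destruct (Hu v) as [al Hal].
  assert (Hal0 : al <> zero).
  { intros ->. apply Hv. rewrite <- Hal. apply act0. }
  destruct (mul_inverse nvs_scalar_group Hal0) as [be [_ [_ Hbeal]]].
  destruct (Hu w) as [c <-].
  exists (mul c be).
  rewrite <- Hal, actA, <- (mulA nvs_scalar_group), Hbeal,
    (mul1r nvs_scalar_group).
  reflexivity.
Qed.

Section FullOrbit.

Variable gamma : V.
Hypothesis gamma_neq0 : gamma <> vz.
Hypothesis gamma_full : full_orbit gamma.

Lemma act_gamma_inj a b : act a gamma = act b gamma -> a = b.
Proof. intro E. destruct (act_free E); [contradiction | assumption]. Qed.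

Lemma quasi_kernel_full_orbit : in_quasi_kernel V F add act gamma.
Proof.
  intros a b. destruct (gamma_full (add (act a gamma) (act b gamma))) as [c Hc].
  exists c. symmetry. exact Hc.
Qed.

Lemma quasi_kernel_sum_unique a b :
  exists! d, add (act a gamma) (act b gamma) = act d gamma.
Proof.
  destruct (quasi_kernel_full_orbit a b) as [c Hc].
  exists c. split; [exact Hc |].
  intros d Hd. apply act_gamma_inj. rewrite <- Hc. exact Hd.
Qed.

Definition coord (v : V) : F :=
  proj1_sig (constructive_indefinite_description _ (gamma_full v)).

Lemma coordK v : act (coord v) gamma = v.
Proof. exact (proj2_sig (constructive_indefinite_description _ (gamma_full v))). Qed.

Lemma coord_act a : coord (act a gamma) = a.
Proof. apply act_gamma_inj, coordK. Qed.

Section InducedAddition.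

Variable plus_g : F -> F -> F.
Hypothesis plus_gE :
  forall a b, add (act a gamma) (act b gamma) = act (plus_g a b) gamma.

Lemma plus_g_abelian_group : is_abelian_group F plus_g zero (mul m1).
Proof.
  destruct nvs_abelian_group as (addA & addC & add0 & addN).
  repeat split; intros; apply act_gamma_inj; rewrite <- !plus_gE.
  - apply addA.
  - apply addC.
  - rewrite act0. apply add0.
  - rewrite act0, <- actA, actN1. apply addN.
Qed.

Lemma mul_plus_gr c a b : mul c (plus_g a b) = plus_g (mul c a) (mul c b).
Proof.
  apply act_gamma_inj. rewrite <- actA, <- !plus_gE, <- !actA. apply act_addr.
Qed.

Lemma coord_isomorphism :
  is_nvs_isomorphism V F F F add act mul zero plus_g mul mul zero
    coord (fun a => a).
Proof.
  repeat split; auto.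
  - intros u v. apply act_gamma_inj. rewrite <- plus_gE, !coordK. reflexivity.
  - intros u v E. rewrite <- (coordK u), <- (coordK v), E. reflexivity.
  - intro a. exists (act a gamma). apply coord_act.
  - intros c Hc. exists c. auto.
  - intros u a _. rewrite <- (coordK u) at 1. rewrite actA. apply coord_act.
Qed.

End InducedAddition.

End FullOrbit.

End NearVectorSpace.

Theorem mainTheorem8 (F : Type) (mul : F -> F -> F) (one zero m1 : F)
  (add : F -> F -> F) (vz : F) (vopp : F -> F) (act : F -> F -> F) :
  is_near_vector_space F F add vz vopp act mul one zero m1 ->
  (forall x : F, exists a : F, act a one = x) ->
  forall gamma : F, gamma <> vz ->
    in_quasi_kernel F F add act gamma /\
    (forall a b : F, exists! d : F, add (act a gamma) (act b gamma) = act d gamma) /\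
    (forall plus_g : F -> F -> F,
       (forall a b : F, add (act a gamma) (act b gamma) = act (plus_g a b) gamma) ->
       is_left_near_field F plus_g mul zero /\
       (exists opp_g : F -> F,
          is_near_vector_space F F plus_g zero opp_g mul mul one zero m1) /\
       exists (Psi : F -> F) (phi : F -> F),
         is_nvs_isomorphism F F F F add act mul zero plus_g mul mul zero Psi phi).
Proof.
  intros nvs one_full gamma Hgamma.
  pose proof (full_orbit_trans nvs Hgamma one_full) as gamma_full.
  pose proof (nvs_scalar_group nvs) as sg.
  split; [exact (quasi_kernel_full_orbit add gamma_full) |].
  split; [exact (quasi_kernel_sum_unique nvs Hgamma gamma_full) |].
  intros plus_g plus_gE.
  pose proof (plus_g_abelian_group nvs Hgamma plus_g plus_gE) as ag.
  pose proof (mul_plus_gr nvs Hgamma plus_g plus_gE) as distr.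
  split; [exact (left_near_field_of_scalar_group sg ag distr) |].
  split; [exists (mul m1); exact (canonical_near_vector_space sg ag distr) |].
  exists (coord gamma_full), (fun a => a).
  exact (coord_isomorphism nvs Hgamma gamma_full plus_g plus_gE).
Qed.
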